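(* Let $Q_k$ be a $K$-subset system and $(X,\tau)$ a $T_0$ space. Then $X$ is $k$-well-filtered if and only if the map $\lambda:X\to K(X)$, $\lambda(x)=[\{x\}]$, is a homeomorphism.
   Context: $Q(X)$: nonempty compact saturated subsets of $X$; a family is filtered if nonempty and any two members contain a third. A $C$-subset system $Q_k$ assigns to each $T_0$ space $X$ a set $Q_k(X)$ with $\{\uparrow x\mid x\in X\}\subseteq Q_k(X)\subseteq Q(X)$. A nonempty $A\subseteq X$ is $k$-Rudin if for some filtered $\mathcal K\subseteq Q_k(X)$, $\overline A$ is a minimal closed set meeting every member of $\mathcal K$; $\mathrm{K}^R(X)$ is the set of $k$-Rudin sets. $Q_k$ is a $K$-subset system if for all $T_0$ spaces $X,Y$, continuous $f:X\to Y$ and $A\in\mathrm K^R(X)$, $f(A)\in\mathrm K^R(Y)$. $X$ is $k$-well-filtered if for every open $U$ and filtered $\mathcal K\subseteq Q_k(X)$, $\bigcap\mathcal K\subseteq U$ implies $K\subseteq U$ for some $K\in\mathcal K$. On $\mathrm K^R(X)$ put $A\sim B$ iff $\overline A=\overline B$; $K(X)$ is the set of classes $[A]$, topologized by the open sets $U^*=\{[A]\mid A\cap U\ne\emptyset\}$, $U\in\tau$. *)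

From mathcomp Require Import all_boot all_order.
From mathcomp Require Import all_classical all_reals all_analysis.
Set Implicit Arguments. Unset Strict Implicit. Unset Printing Implicit Defensive.
Local Open Scope classical_set_scope.

Definition T0 (X : topologicalType) : Prop := @kolmogorov_space X.

(* specialization order: x <= y iff x \in cl{y};  up x = ↑x *)
Definition up (X : topologicalType) (x : X) : set X :=
  [set y | closure [set y] x].

Definition saturated (X : topologicalType) (A : set X) : Prop :=
  forall x, (forall U : set X, open U -> A `<=` U -> U x) -> A x.

Definition Qset (X : topologicalType) : set (set X) :=
  [set K | K !=set0 /\ compact K /\ saturated K].

(* a subset system: assigns to every space X a family of subsets of X
   (only its values on T0 spaces matter) *)
Definition subset_system := forall X : topologicalType, set (set X).

Definition C_subset_system (Qk : subset_system) : Prop :=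
  forall X : topologicalType, T0 X ->
    (forall x : X, Qk X (up x)) /\ Qk X `<=` @Qset X.

Definition filtered (X : Type) (F : set (set X)) : Prop :=
  F !=set0 /\
  forall K1 K2, F K1 -> F K2 -> exists K3, F K3 /\ K3 `<=` K1 `&` K2.

Definition meets_all (X : Type) (C : set X) (F : set (set X)) : Prop :=
  forall K, F K -> C `&` K !=set0.

Definition kRudin (Qk : subset_system) (X : topologicalType) (A : set X) : Prop :=
  A !=set0 /\
  exists F : set (set X), F `<=` Qk X /\ filtered F /\
    meets_all (closure A) F /\
    (forall C : set X, closed C -> C `<=` closure A -> meets_all C F ->
       C = closure A).

Definition K_subset_system (Qk : subset_system) : Prop :=
  C_subset_system Qk /\
  forall (X Y : topologicalType) (f : X -> Y), T0 X -> T0 Y -> continuous f ->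
    forall A : set X, kRudin Qk A -> kRudin Qk (f @` A).

Definition k_well_filtered (Qk : subset_system) (X : topologicalType) : Prop :=
  forall (U : set X) (F : set (set X)), open U -> F `<=` Qk X -> filtered F ->
    \bigcap_(K in F) K `<=` U -> exists2 K, F K & K `<=` U.

(* the equivalence class [A] of a k-Rudin set A (A ~ B iff cl A = cl B) *)
Definition rclass (Qk : subset_system) (X : topologicalType) (A : set X)
  : set (set X) := [set B | kRudin Qk B /\ closure B = closure A].

Definition KX (Qk : subset_system) (X : topologicalType) : set (set (set X)) :=
  [set c | exists A, kRudin Qk A /\ c = rclass Qk A].

Definition ustar (Qk : subset_system) (X : topologicalType) (U : set X)
  : set (set (set X)) :=
  [set c | exists A, [/\ kRudin Qk A, c = rclass Qk A & A `&` U !=set0]].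

Definition KX_open (Qk : subset_system) (X : topologicalType)
  : set (set (set (set X))) :=
  [set V | exists U : set X, open U /\ V = ustar Qk U].

Definition lambda (Qk : subset_system) (X : topologicalType) (x : X)
  : set (set X) := rclass Qk [set x].

Definition homeomorphism_onto (X : topologicalType) (T : Type) (f : X -> T)
  (S : set T) (openS : set (set T)) : Prop :=
  [/\ (forall x, S (f x)),
      injective f,
      (forall s, S s -> exists x, f x = s),
      (forall V, openS V -> open (f @^-1` V)) &
      (forall U : set X, open U -> openS (f @` U))].

(* If X is k-well-filtered, every k-Rudin set A is the closure of a point: otherwise the
   complement of cl A would be an open set containing the intersection of the witnessing
   filtered family, so it would contain one of its members, which A's closure meets.  This
   makes lambda surjective, T0 makes it injective, and lambda^-1(U^* ) = U for open U.
   Conversely, if some filtered family in Q_k(X) avoids an open U member-wise although its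
   intersection lies in U, Zorn's lemma and compactness give a maximal open W >= U still
   containing no member; the closed set X \ W is then k-Rudin, so it is cl {x} for a point x
   that lies in every (saturated) member, hence in U, a contradiction. *)
From mathcomp Require Import all_boot all_order.
From mathcomp Require Import all_classical all_reals all_analysis.
Local Open Scope classical_set_scope.

Section Specialization.
Context {X : topologicalType}.

Lemma closure_sub_closed {A C : set X} : closed C -> A `<=` C -> closure A `<=` C.
Proof. by move=> cC AC; rewrite closureE; exact: smallest_sub. Qed.

Lemma closure_set1_open {W : set X} {x y : X} :
  closure [set x] y -> open W -> W y -> W x.
Proof. by move=> xy oW Wy; have [_ [-> //]] := xy W (open_nbhs_nbhs (conj oW Wy)). Qed.

Lemma saturated_closure_set1 {K : set X} {x y : X} :
  saturated K -> closure [set x] y -> K y -> K x.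
Proof.
by move=> satK xy Ky; apply: satK => W oW KW; exact: closure_set1_open xy oW (KW y Ky).
Qed.

Lemma closure_set1_inj : T0 X -> injective (fun x : X => closure [set x]).
Proof.
move=> HX x y /= e; apply: contrapT => /eqP/HX[A].
case=> [[/set_mem xA /set_mem yA]|[/set_mem yA /set_mem xA]].
- have /(_ A xA) [z [Ey Az]] : closure [set y] x by rewrite -e; exact: subset_closure.
  by apply: yA; rewrite -Ey.
- have /(_ A yA) [z [Ex Az]] : closure [set x] y by rewrite e; exact: subset_closure.
  by apply: xA; rewrite -Ex.
Qed.

Lemma compact_setU_bigcup_chain {K U : set X} {G : set (set X)} :
  compact K -> open U -> G !=set0 -> total_on G subset -> (forall V, G V -> open V) ->
  (forall V, G V -> ~ K `<=` U `|` V) -> ~ K `<=` U `|` \bigcup_(V in G) V.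
Proof.
move=> cK oU [V0 GV0] Gtot Gop GnK KG.
have B_filter : Filter (filter_from G (fun V => K `\` (U `|` V))).
  apply: filter_from_filter; first by exists V0.
  move=> V1 V2 GV1 GV2; have [V12|V21] := Gtot _ _ GV1 GV2.
  - exists V2 => // y KUy; split => //; exact: (setDS (@setUS _ U _ _ V12)) _ KUy.
  - exists V1 => // y KUy; split => //; exact: (setDS (@setUS _ U _ _ V21)) _ KUy.
have B_proper : ProperFilter (filter_from G (fun V => K `\` (U `|` V))).
  by apply: filter_from_proper => V /GnK /nonsubset.
have [|x [Kx clx]] := cK _ B_proper; first by exists V0 => // y [].
have [V1 GV1 UV1x] : exists2 V, G V & (U `|` V) x.
  by case: (KG x Kx) => [Ux|[V GV Vx]]; [exists V0; last left | exists V; last right].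
have [z [[_ nUV1z] UV1z]] := clx _ _ (in_filter_from _ GV1)
  (open_nbhs_nbhs (conj (openU oU (Gop _ GV1)) UV1x)).
exact: nUV1z.
Qed.

Lemma maximal_open_avoiding {F : set (set X)} {U : set X} :
  (forall K, F K -> compact K) -> open U -> (forall K, F K -> ~ K `<=` U) ->
  exists W, [/\ open W, U `<=` W, (forall K, F K -> ~ K `<=` W) &
    forall W', open W' -> W `<=` W' -> (forall K, F K -> ~ K `<=` W') -> W' `<=` W].
Proof.
move=> cF oU FnU.
pose P := [set V : set X | open V /\ forall K, F K -> ~ K `<=` U `|` V].
have [V [[oV FnUV] Vmax]] : exists V, P V /\ forall V', V `<` V' -> ~ P V'.
  apply: Zorn_bigcup => G GP Gtot; split; first by apply: bigcup_open => V /GP[].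
  have [->|/set0P G0] := eqVneq G set0; first by rewrite bigcup_set0 setU0.
  move=> K FK; apply: compact_setU_bigcup_chain (cF K FK) oU G0 Gtot _ _.
  - by move=> V /GP[].
  - by move=> V /GP[_ /(_ K FK)].
exists (U `|` V); split => //; first exact: openU.
move=> W' oW' UVW' FnW' y W'y; right; apply: contrapT => nVy.
have UW' : U `|` W' = W' by apply/setUidPr => z Uz; apply: UVW'; left.
apply: (Vmax W'); last by split; rewrite // UW'.
by split=> [z Vz|/(_ y W'y)//]; apply: UVW'; right.
Qed.

End Specialization.

Definition kRudin_sober (Qk : subset_system) (X : topologicalType) : Prop :=
  forall A : set X, kRudin Qk A -> exists x, closure A = closure [set x].

Section KRudin.
Context {Qk : subset_system} {X : topologicalType}.

Lemma kRudin_set1 : C_subset_system Qk -> T0 X -> forall x : X, kRudin Qk [set x].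
Proof.
move=> HC HX x; split; first by exists x.
exists [set up x]; split; first by move=> _ ->; exact: (HC X HX).1.
split; first by split; [exists (up x) | move=> _ _ -> ->; exists (up x)].
split; first by move=> _ ->; exists x; split; exact: subset_closure.
move=> C cC sC mC; apply/seteqP; split=> //.
apply: closure_sub_closed => // _ ->.
have [y [Cy xy]] := mC _ erefl.
by apply: closure_sub_closed cC _ _ xy => _ ->.
Qed.

Lemma rclassP {A B : set X} :
  kRudin Qk A -> rclass Qk A = rclass Qk B <-> closure A = closure B.
Proof.
move=> kA; split=> [e|e]; last by rewrite /rclass e.
by have : rclass Qk A A by []; rewrite e => -[].
Qed.

Lemma kRudin_setC_maximal {F : set (set X)} {W : set X} :
  F `<=` Qk X -> filtered F -> open W -> (forall K, F K -> ~ K `<=` W) ->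
  (forall W', open W' -> W `<=` W' -> (forall K, F K -> ~ K `<=` W') -> W' `<=` W) ->
  kRudin Qk (~` W).
Proof.
move=> FQ Ffilt oW FnW Wmax.
have clW : closure (~` W) = ~` W by rewrite -(closure_id _).1 //; exact: open_closedC.
have meetW : meets_all (~` W) F by move=> K /FnW /nonsubset [y [Ky nWy]]; exists y.
split; first by have [[K0 FK0] _] := Ffilt; have [y [nWy _]] := meetW K0 FK0; exists y.
exists F; rewrite clW; split=> //; split=> //; split=> // C cC CW meetC.
apply/seteqP; split=> // y nWy; apply: contrapT => nCy; apply: nWy.
apply: (Wmax (~` C)) => //; first exact: closed_openC.
- by move=> z Wz Cz; exact: CW z Cz Wz.
- by move=> K /meetC [z [Cz Kz]] /(_ z Kz).
Qed.

Lemma kwf_kRudin_sober : k_well_filtered Qk X -> kRudin_sober Qk X.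
Proof.
move=> kwf A [A0 [F [FQ [Ffilt [meetA minA]]]]].
have [x [Ax Fx]] : exists x, closure A x /\ forall K, F K -> K x.
  apply: contrapT => nx.
  have [K FK KnA] := kwf (~` closure A) F (closed_openC (@closed_closure _ A)) FQ Ffilt
    (fun y Fy Ay => nx (ex_intro _ y (conj Ay Fy))).
  by have [z [Az Kz]] := meetA K FK; exact: KnA z Kz Az.
exists x; symmetry; apply: minA.
- exact: closed_closure.
- by apply: closure_sub_closed; [exact: closed_closure | move=> _ ->].
- by move=> K FK; exists x; split; [exact: subset_closure | exact: Fx].
Qed.

Lemma kRudin_sober_kwf :
  C_subset_system Qk -> T0 X -> kRudin_sober Qk X -> k_well_filtered Qk X.
Proof.
move=> HC HX sob U F oU FQ Ffilt FU; apply: contrapT => nK.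
have FnU : forall K, F K -> ~ K `<=` U by move=> K FK KU; apply: nK; exists K.
have cs : forall K, F K -> compact K /\ saturated K.
  by move=> K /FQ /((HC X HX).2) [_ []].
have [W [oW UW FnW Wmax]] := maximal_open_avoiding (fun K FK => (cs K FK).1) oU FnU.
have [x ex] := sob _ (kRudin_setC_maximal FQ Ffilt oW FnW Wmax).
rewrite -(closure_id _).1 in ex; last exact: open_closedC.
have nWx : (~` W) x by rewrite ex; exact: subset_closure.
apply/nWx/UW/FU => K FK.
have [y [Ky nWy]] := nonsubset (FnW K FK).
by apply: saturated_closure_set1 (cs K FK).2 _ Ky; rewrite -ex.
Qed.

Lemma lambda_preimage_ustar (U : set X) : C_subset_system Qk -> T0 X ->
  open U -> @lambda Qk X @^-1` ustar Qk U = U.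
Proof.
move=> HC HX oU; apply/seteqP; split=> x /=.
- case=> A [kA e [a [Aa Ua]]]; apply: closure_set1_open oU Ua.
  by rewrite -((rclassP kA).1 (esym e)); exact: subset_closure.
- by move=> Ux; exists [set x]; split => //; [exact: kRudin_set1 | exists x].
Qed.

Lemma lambda_image_open (U : set X) : C_subset_system Qk -> T0 X -> kRudin_sober Qk X ->
  open U -> @lambda Qk X @` U = ustar Qk U.
Proof.
move=> HC HX sob oU; apply/seteqP; split.
  by move=> _ [x Ux <-]; exists [set x]; split => //; [exact: kRudin_set1 | exists x].
move=> _ [A [kA -> [a [Aa Ua]]]]; have [x ex] := sob A kA.
exists x; last by apply/esym/(rclassP kA).
by apply: closure_set1_open oU Ua; rewrite -ex; exact: subset_closure.
Qed.

Lemma lambda_homeomorphism : C_subset_system Qk -> T0 X -> kRudin_sober Qk X ->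
  homeomorphism_onto (@lambda Qk X) (@KX Qk X) (@KX_open Qk X).
Proof.
move=> HC HX sob; have kx := kRudin_set1 HC HX; split.
- by move=> x; exists [set x].
- by move=> x y /(rclassP (kx x)); exact: closure_set1_inj.
- by move=> _ [A [kA ->]]; have [x ex] := sob A kA; exists x; apply/esym/(rclassP kA).
- by move=> _ [U [oU ->]]; rewrite lambda_preimage_ustar.
- by move=> U oU; exists U; rewrite lambda_image_open.
Qed.

Lemma homeomorphism_kRudin_sober :
  homeomorphism_onto (@lambda Qk X) (@KX Qk X) (@KX_open Qk X) -> kRudin_sober Qk X.
Proof.
case=> _ _ onto _ _ A kA.
have [x ex] := onto (rclass Qk A) (ex_intro _ A (conj kA erefl)).
by exists x; apply/(rclassP kA); rewrite -ex.
Qed.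

End KRudin.

Theorem lemma4 (Qk : subset_system) (HK : K_subset_system Qk)
  (X : topologicalType) (HX : T0 X) :
  k_well_filtered Qk X <->
  homeomorphism_onto (@lambda Qk X) (@KX Qk X) (@KX_open Qk X).
Proof.
have HC := HK.1; split=> [kwf|homeo].
- exact: (lambda_homeomorphism HC HX (kwf_kRudin_sober kwf)).
- exact: (kRudin_sober_kwf HC HX (homeomorphism_kRudin_sober homeo)).
Qed.
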